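(* There exist absolute constants $c_1,c_2>0$ such that the following holds for all sufficiently large $n$. Let $t,s$ be integers with $2\le t<s<n/2$, and let $G$ be a graph on $n$ vertices such that every induced subgraph of $G$ on $s$ vertices contains an independent set of size $t$. Let $k=\lfloor \frac{s}{t-1}\rfloor$. Then: (i) if $k\le 2\log n$, then $G$ contains an independent set of size at least $c_1\, k\, n^{1/k}$; (ii) if $k>2\log n$, then $G$ contains an independent set of size at least $c_2\,\frac{\log n}{\log (k/\log n)}$.
   Context: All logarithms are natural. An independent set is a set of pairwise non-adjacent vertices. The $\Omega(\cdot)$ bounds of the paper are expressed here via absolute constants. *)

From mathcomp Require Import all_boot.
From Stdlib Require Import Reals.
Set Implicit Arguments. Unset Strict Implicit. Unset Printing Implicit Defensive.

Definition simple_graph (T : finType) (e : rel T) : Prop :=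
  symmetric e /\ irreflexive e.

Definition independent (T : finType) (e : rel T) (I : {set T}) : Prop :=
  forall x y, x \in I -> y \in I -> ~~ e x y.

(* Greedily remove disjoint (k+1)-cliques from G.  Fewer than t-1 of them can be
   found, since t-1 of them would cover (t-1)(k+1) >= s vertices and an s-subset
   of their union has no independent set of size t.  What remains is a set R of
   at least n/4 vertices (for k >= 2) with no (k+1)-clique, so by the
   Erdos-Szekeres bound R(k+1, a+1) <= C(k+a, k) it contains an independent set
   of size a+1 as soon as C(k+a, k) <= n/4.  Using C(m, p) <= (3m/p)^p one can
   take a ~ k n^(1/k) / 24 when n^(1/k) >= 24, a ~ log n / 100 when n^(1/k) < 24
   and k <= 2 log n, and a ~ log n / (100 log (k / log n)) when k > 2 log n.
   For k = 1 the set R spans no edge, and R or an independent t-set has at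
   least n/3 vertices. *)

From mathcomp Require Import all_boot zify_ssreflect.
From Stdlib Require Import Reals Lra Lia Classical.
Set Implicit Arguments. Unset Strict Implicit. Unset Printing Implicit Defensive.

Lemma ffact_le_expn n p : n ^_ p <= expn n p.
Proof.
elim: p n => [|p IH] [|n] //; rewrite ffactnS expnS leq_mul2l /=.
apply: leq_trans (IH n) _; case: p {IH} => [|p]; first by [].
by rewrite leq_exp2r.
Qed.

Local Open Scope R_scope.

Lemma INR_muln m n : INR (m * n)%nat = INR m * INR n.
Proof. exact: mult_INR. Qed.

Lemma INR_addn m n : INR (m + n)%nat = INR m + INR n.
Proof. exact: plus_INR. Qed.

Lemma INR_expn m n : INR (expn m n) = INR m ^ n.
Proof. by elim: n => [|n IH] //=; rewrite expnS INR_muln IH. Qed.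

Lemma exists_nat_floor x : 0 <= x -> exists a : nat, INR a <= x < INR a + 1.
Proof.
move=> x0; have [floor_le floor_gt] := base_Int_part x.
have z0 : (0 <= Int_part x)%Z.
  have : (-1 < Int_part x)%Z by apply: lt_IZR; lra.
  lia.
by exists (Z.to_nat (Int_part x)); rewrite INR_IZR_INZ Znat.Z2Nat.id //; lra.
Qed.

Lemma ln_le x y : 0 < x -> x <= y -> ln x <= ln y.
Proof.
move=> x0 /Rle_lt_or_eq_dec [/(ln_increasing _ _ x0)/Rlt_le|->] //.
exact: Rle_refl.
Qed.

Lemma exp_le x y : x <= y -> exp x <= exp y.
Proof.
by case/Rle_lt_or_eq_dec=> [/exp_increasing/Rlt_le|->] //; apply: Rle_refl.
Qed.

Lemma ln_le_sub1 x : 0 < x -> ln x <= x - 1.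
Proof. by move=> x0; have := exp_ineq1_le (ln x); rewrite exp_ln //; lra. Qed.

Lemma ln_le_of_le_pow2 x m : 0 < x -> x <= 2 ^ m -> ln x <= INR m.
Proof.
move=> x0 xm; apply: Rle_trans (ln_le x0 xm) _; rewrite ln_pow; last lra.
have := @ln_le_sub1 2 ltac:(lra); have := pos_INR m; nra.
Qed.

Lemma succ_pow_le (a : nat) : INR a.+1 ^ a <= 3 * INR a ^ a.
Proof.
case: a => [|a]; first by rewrite /=; lra.
have a0 : 0 < INR a.+1 by apply: lt_0_INR; lia.
have -> : INR a.+2 = INR a.+1 * (1 + / INR a.+1) by rewrite S_INR; field; lra.
rewrite Rpow_mult_distr Rmult_comm.
(* (1 + 1/m)^m <= (exp (1/m))^m = e <= 3 with m = a+1 *)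
have : (1 + / INR a.+1) ^ a.+1 <= 3.
  apply: Rle_trans (pow_incr _ _ _ (conj _ (exp_ineq1_le _))) _.
    by have := Rinv_0_lt_compat _ a0; lra.
  rewrite -Rpower_pow; last exact: exp_pos.
  rewrite /Rpower ln_exp Rinv_r; last lra.
  exact: exp_le_3.
have := pow_le _ a.+1 (Rlt_le _ _ a0); simpl; nra.
Qed.

Lemma pow_self_le_fact (a : nat) : INR a ^ a <= 3 ^ a * INR a`!.
Proof.
elim: a => [|a IH]; first by rewrite /=; lra.
rewrite factS INR_muln.
change (INR a.+1 * INR a.+1 ^ a <= 3 * 3 ^ a * (INR a.+1 * INR a`!)).
have h : INR a.+1 ^ a <= 3 * (3 ^ a * INR a`!) by have := succ_pow_le a; lra.
have := Rmult_le_compat_l _ _ _ (pos_INR a.+1) h; lra.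
Qed.

Lemma bin_le_pow n p : (0 < p)%nat -> INR 'C(n, p) <= (3 * INR n / INR p) ^ p.
Proof.
move=> p0; have p0R : 0 < INR p by apply: lt_0_INR; lia.
have pp0 : 0 < INR p ^ p by apply: pow_lt.
have bin_fact : INR 'C(n, p) * INR p`! <= INR n ^ p.
  by rewrite -INR_muln -INR_expn bin_ffact; apply/le_INR/leP/ffact_le_expn.
rewrite /Rdiv !Rpow_mult_distr pow_inv.
apply: (Rmult_le_reg_r (INR p ^ p)) => //; rewrite Rmult_assoc Rinv_l; last lra.
have := pow_self_le_fact p; have := pos_INR 'C(n, p); have := pow_lt 3 p ltac:(lra).
nra.
Qed.

Lemma mul_ln_div_le a A K : 0 < a -> a <= A -> A <= K ->
  a * ln (K / a) <= A * (ln (K / A) + 1).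
Proof.
move=> a0 aA AK.
have KA : 0 <= ln (K / A).
  rewrite -ln_1; apply: ln_le; first lra.
  by apply: (Rmult_le_reg_r A); [lra | rewrite /Rdiv Rmult_assoc Rinv_l; lra].
(* K/a = (K/A) (A/a) and a ln (A/a) <= A - a *)
have -> : K / a = K / A * (A / a) by field; lra.
rewrite ln_mult; [| apply: Rdiv_lt_0_compat; lra ..].
have Aa : a * ln (A / a) <= A - a.
  have := ln_le_sub1 (Rdiv_lt_0_compat _ _ (Rlt_le_trans _ _ _ a0 aA) a0).
  have -> : A - a = a * (A / a - 1) by field; lra.
  by apply: Rmult_le_compat_l; lra.
nra.
Qed.

Lemma bin_le_exp (k a : nat) (A : R) : (0 < a)%nat -> INR a <= A <= INR k ->
  INR 'C(k + a, a) <= exp (A * (ln (6 * INR k / A) + 1)).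
Proof.
move=> a0 [aA Ak]; have a0R : 0 < INR a by apply: lt_0_INR; lia.
apply: Rle_trans (bin_le_pow (k + a) a0) _.
have base_le : 3 * INR (k + a) / INR a <= 6 * INR k / INR a.
  rewrite INR_addn /Rdiv; apply: Rmult_le_compat_r; last lra.
  by left; apply: Rinv_0_lt_compat.
have base0 : 0 <= 3 * INR (k + a) / INR a.
  by rewrite INR_addn; left; apply: Rdiv_lt_0_compat => //; have := pos_INR k; lra.
apply: Rle_trans (pow_incr _ _ _ (conj base0 base_le)) _.
rewrite -Rpower_pow /Rpower; last by apply: Rdiv_lt_0_compat; lra.
by apply/exp_le/mul_ln_div_le; lra.
Qed.

Lemma exists_bin_le_floor (k : nat) (m A : R) : 1 <= m -> 0 < A <= INR k ->
  A * (ln (6 * INR k / A) + 1) <= ln m ->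
  exists a : nat, INR 'C(k + a, k) <= m /\ A < INR a.+1.
Proof.
move=> m1 [A0 Ak] Hm; have [a [aA Aa]] := exists_nat_floor (Rlt_le _ _ A0).
exists a; split; last by rewrite S_INR.
rewrite -bin_sub ?leq_addr // addKn.
case: a aA {Aa} => [|a] aA; first by rewrite bin0 /=.
rewrite -(exp_ln m); last lra.
by apply: Rle_trans (bin_le_exp (ltn0Sn a) (conj aA Ak)) (exp_le Hm).
Qed.

Lemma exists_bin_le_large_root (n k : nat) : (0 < k)%nat -> 0 < INR n ->
  24 <= Rpower (INR n) (/ INR k) ->
  exists a : nat, INR 'C(k + a, k) <= INR n / 4 /\
    INR k * Rpower (INR n) (/ INR k) / 24 <= INR a.+1.
Proof.
move=> k0 n0; set y := Rpower _ _ => y24.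
have k1 : 1 <= INR k by apply: (le_INR 1); lia.
have ypow : y ^ k = INR n.
  by rewrite -Rpower_pow /y ?Rpower_mult ?Rinv_l ?Rpower_1 //; [lra | apply: exp_pos].
have [a [ax xa]] := @exists_nat_floor (INR k * (y / 12 - 1)) ltac:(nra).
exists a; split; last by rewrite S_INR; nra.
(* binomial bound with p = k: (3 (k + a) / k)^k <= (y / 4)^k = n / 4^k *)
apply: Rle_trans (bin_le_pow (k + a) k0) _.
have base0 : 0 <= 3 * INR (k + a) / INR k.
  by rewrite INR_addn; left; apply: Rdiv_lt_0_compat; have := pos_INR a; lra.
have base_le : 3 * INR (k + a) / INR k <= y / 4.
  apply: (Rmult_le_reg_r (INR k)); first lra.
  rewrite INR_addn /Rdiv Rmult_assoc Rinv_l; lra.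
apply: Rle_trans (pow_incr _ _ _ (conj base0 base_le)) _.
rewrite /Rdiv Rpow_mult_distr ypow pow_inv.
apply: Rmult_le_compat_l; first lra.
apply: Rinv_le_contravar; first lra.
by have := Rle_pow 4 1 k ltac:(lra) ltac:(lia); rewrite /=; lra.
Qed.

Lemma two_lt_ln x : 16 <= x -> 2 < ln x.
Proof.
move=> x16; apply: Rlt_le_trans (@ln_le 16 x ltac:(lra) x16).
have -> : 16 = 2 ^ 4 by rewrite /=; lra.
by rewrite ln_pow; [have := ln_lt_2; rewrite /=; lra | lra].
Qed.

Lemma ln_quarter_ge x : 16 <= x -> ln x / 2 <= ln (x / 4).
Proof.
move=> x16; rewrite /Rdiv ln_mult ?ln_Rinv; [|lra|lra|lra].
have := @ln_le 16 x ltac:(lra) x16.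
have -> : 16 = 4 * 4 by lra.
rewrite ln_mult; lra.
Qed.

Lemma exists_bin_le_small_root (n k : nat) : (0 < k)%nat -> 16 <= INR n ->
  Rpower (INR n) (/ INR k) < 24 -> INR k <= 2 * ln (INR n) ->
  exists a : nat, INR 'C(k + a, k) <= INR n / 4 /\ ln (INR n) / 100 < INR a.+1.
Proof.
move=> k0 n16 y24 kL; have L2 := two_lt_ln n16.
have Lq := ln_quarter_ge n16; set L := ln (INR n) in kL L2 Lq *.
have k0R : 0 < INR k by apply: lt_0_INR; lia.
have Lk : L < 5 * INR k.
  have ln24 : ln 24 <= 5.
    by have := @ln_le_of_le_pow2 24 5; rewrite INR_IZR_INZ /=; lra.
  have := ln_increasing _ _ (exp_pos _) y24; rewrite ln_Rpower -/L.
  by have := Rinv_r (INR k); nra.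
apply: exists_bin_le_floor; [lra | lra |].
have ln1200 : ln (6 * INR k / (L / 100)) <= 11.
  apply: (Rle_trans _ (INR 11)); last by rewrite INR_IZR_INZ /=; lra.
  apply: ln_le_of_le_pow2; first by apply: Rdiv_lt_0_compat; lra.
  apply: (Rmult_le_reg_r (L / 100)); first lra.
  by rewrite /Rdiv Rmult_assoc Rinv_l /=; lra.
nra.
Qed.

Lemma exists_bin_le_small_k (n k : nat) : (0 < k)%nat -> 16 <= INR n ->
  INR k <= 2 * ln (INR n) ->
  exists a : nat, INR 'C(k + a, k) <= INR n / 4 /\
    1 / 4800 * INR k * Rpower (INR n) (/ INR k) <= INR a.+1.
Proof.
move=> k0 n16 kL; have k0R : 0 < INR k by apply: lt_0_INR; lia.
have n0 : 0 < INR n by lra.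
have y0 : 0 < Rpower (INR n) (/ INR k) by apply: exp_pos.
have [y24|y24] := Rle_or_lt 24 (Rpower (INR n) (/ INR k)).
  have [a [Ha Hb]] := exists_bin_le_large_root k0 n0 y24.
  by exists a; split => //; nra.
have [a [Ha Hb]] := exists_bin_le_small_root k0 n16 y24 kL.
by exists a; split => //; nra.
Qed.

Lemma exists_bin_le_large_k (n k : nat) : 16 <= INR n ->
  2 * ln (INR n) < INR k ->
  exists a : nat, INR 'C(k + a, k) <= INR n / 4 /\
    1 / 100 * (ln (INR n) / ln (INR k / ln (INR n))) <= INR a.+1.
Proof.
move=> n16 kL; have L2 := two_lt_ln n16.
have Lq := ln_quarter_ge n16; set L := ln (INR n) in kL L2 Lq *.
have r2 : 2 < INR k / L.
  by apply: (Rmult_lt_reg_r L); [lra | rewrite /Rdiv Rmult_assoc Rinv_l; lra].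
set r := INR k / L in r2 *.
have lr2 : / 2 < ln r by apply: Rlt_trans ln_lt_2 (ln_increasing _ _ _ r2); lra.
set lr := ln r in lr2 *.
set A := 1 / 100 * (L / lr).
have Alr : A * lr = L / 100 by rewrite /A; field; lra.
have A0 : 0 < A.
  by rewrite /A; apply: Rmult_lt_0_compat; [|apply: Rdiv_lt_0_compat]; lra.
have A50 : A < L / 50 by nra.
have entropy : ln (6 * INR k / A) <= 10 + 2 * lr.
  have -> : 6 * INR k / A = 600 * r * lr.
    by rewrite /A /r; field; split; lra.
  rewrite ln_mult; [rewrite ln_mult; [|lra|lra] | nra | lra].
  have ln600 : ln 600 <= 10.
    by have := @ln_le_of_le_pow2 600 10; rewrite INR_IZR_INZ /=; lra.
  have := @ln_le_sub1 lr ltac:(lra); rewrite -/lr; lra.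
have budget : A * (ln (6 * INR k / A) + 1) <= ln (INR n / 4).
  have := Rmult_le_compat_l A _ _ (Rlt_le _ _ A0) (Rplus_le_compat_r 1 _ _ entropy).
  nra.
have Ak : A <= INR k by lra.
have n4 : 1 <= INR n / 4 by lra.
have [a [Ha Hb]] := exists_bin_le_floor n4 (conj A0 Ak) budget.
by exists a; split => //; lra.
Qed.

Local Close Scope R_scope.

Lemma exists_subset_card (T : finType) (A : {set T}) m :
  m <= #|A| -> exists B : {set T}, B \subset A /\ #|B| = m.
Proof.
move/card_geqP => [r [ur sr rA]]; exists [set x in r]; split.
  by apply/subsetP => x; rewrite inE => /rA.
by rewrite cardsE (card_uniqP ur) sr.
Qed.

Definition clique (T : finType) (e : rel T) (C : {set T}) : Prop :=
  forall x y, x \in C -> y \in C -> x != y -> e x y.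

Section Cliques.
Variables (T : finType) (e : rel T).

Lemma independentS (A B : {set T}) : A \subset B -> independent e B -> independent e A.
Proof. by move=> /subsetP AB iB x y /AB xB /AB; apply: iB. Qed.

Lemma card_independent_clique_le1 (I C : {set T}) :
  independent e I -> clique e C -> #|I :&: C| <= 1.
Proof.
move=> iI cC; apply/card_le1_eqP => x y /setIP [xI xC] /setIP [yI yC].
apply/eqP/negPn/negP => xy.
by have := iI y x yI xI; rewrite (cC y x yC xC xy).
Qed.

Lemma card_independent_setU_clique j (U C : {set T}) :
  (forall I : {set T}, I \subset U -> independent e I -> #|I| <= j) ->
  clique e C ->
  forall I : {set T}, I \subset U :|: C -> independent e I -> #|I| <= j.+1.
Proof.
move=> indepU cC I IUC iI.
have -> : I = (I :&: U) :|: (I :&: C) by rewrite -setIUr; apply/esym/setIidPl.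
apply: leq_trans (leq_card_setU _ _) _.
have := indepU _ (subsetIr I U) (independentS (subsetIl I U) iI).
have := card_independent_clique_le1 iI cC.
lia.
Qed.

Hypotheses (e_sym : symmetric e) (e_irr : irreflexive e).

Lemma clique_setU1 v (C : {set T}) :
  clique e C -> {in C, forall y, e v y} -> clique e (v |: C).
Proof.
move=> cC vC x y /setU1P [->|xC] /setU1P [->|yC] xy.
- by rewrite eqxx in xy.
- exact: vC.
- by rewrite e_sym; apply: vC.
- exact: cC.
Qed.

Lemma independent_setU1 v (I : {set T}) :
  independent e I -> {in I, forall y, ~~ e v y} -> independent e (v |: I).
Proof.
move=> iI vI x y /setU1P [->|xI] /setU1P [->|yI].
- by rewrite e_irr.
- exact: vI.
- by rewrite e_sym; apply: vI.
- exact: iI.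
Qed.

Lemma ramsey_bin k a (S : {set T}) : 'C(k + a, k) <= #|S| ->
  (exists C : {set T}, C \subset S /\ clique e C /\ #|C| = k.+1) \/
  (exists I : {set T}, I \subset S /\ independent e I /\ #|I| = a.+1).
Proof.
elim: k a S => [|k IHk] a S.
  rewrite bin0 => /card_gt0P [v vS]; left; exists [set v].
  rewrite sub1set cards1 vS; split=> //; split=> //.
  by move=> x y /set1P -> /set1P ->; rewrite eqxx.
elim: a S => [|a IHa] S.
  rewrite addn0 binn => /card_gt0P [v vS]; right; exists [set v].
  rewrite sub1set cards1 vS; split=> //; split=> //.
  by move=> x y /set1P -> /set1P ->; rewrite e_irr.
move=> HS; have /card_gt0P [v vS] : 0 < #|S|.
  by apply: leq_trans HS; rewrite bin_gt0 leq_addr.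
pose N := (S :\ v) :&: [set y | e v y]; pose M := (S :\ v) :\: [set y | e v y].
have NS : N \subset S by rewrite subIset // subD1set.
have MS : M \subset S by rewrite subDset subsetU // subD1set orbT.
have vN : v \notin N by rewrite !inE eqxx.
have vM : v \notin M by rewrite !inE eqxx andbF.
have Nv : {in N, forall y, e v y} by move=> y; rewrite !inE => /andP [_ ->].
have Mv : {in M, forall y, ~~ e v y} by move=> y; rewrite !inE => /andP [->].
have cardS : #|S| = (#|N| + #|M|).+1.
  by rewrite (cardsD1 v S) vS (cardsID [set y | e v y] (S :\ v)).
move: HS; rewrite addSn binS cardS => HS.
have [HN|HM] : 'C(k + a.+1, k) <= #|N| \/ 'C(k.+1 + a, k.+1) <= #|M|.
  by rewrite addSnnS; lia.
- case: (IHk a.+1 N HN) => [[C [CN [cC nC]]]|[I [IN [iI nI]]]].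
  + left; exists (v |: C).
    split; first by rewrite subUset sub1set vS (subset_trans CN).
    split; first by apply: clique_setU1 => // y /(subsetP CN); apply: Nv.
    by rewrite cardsU1 nC (contra (subsetP CN v) vN).
  + by right; exists I; rewrite (subset_trans IN).
- case: (IHa M HM) => [[C [CM [cC nC]]]|[I [IM [iI nI]]]].
  + by left; exists C; rewrite (subset_trans CM).
  + right; exists (v |: I).
    split; first by rewrite subUset sub1set vS (subset_trans IM).
    split; first by apply: independent_setU1 => // y /(subsetP IM); apply: Mv.
    by rewrite cardsU1 nI (contra (subsetP IM v) vM).
Qed.

End Cliques.

Section CliquePacking.
Variables (T : finType) (e : rel T) (s t : nat).
Hypothesis indep_in_s_sets : forall S : {set T}, #|S| = s ->
  exists I : {set T}, I \subset S /\ independent e I /\ #|I| = t.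

Lemma exists_clique_free_complement k : 0 < t -> s <= (t - 1) * k.+1 ->
  exists R : {set T}, #|T| <= #|R| + (t - 2) * k.+1 /\
    forall C : {set T}, C \subset R -> clique e C -> #|C| <> k.+1.
Proof.
move=> t0 st.
suff packing : forall d j (U : {set T}), j + d = t - 1 -> #|U| = j * k.+1 ->
    (forall I : {set T}, I \subset U -> independent e I -> #|I| <= j) ->
  exists R : {set T}, #|T| <= #|R| + (t - 2) * k.+1 /\
    forall C : {set T}, C \subset R -> clique e C -> #|C| <> k.+1.
  apply: (packing (t - 1) 0 set0) => //; first by rewrite cards0.
  by move=> I /subset_leq_card; rewrite cards0.
elim=> [|d IH] j U jd cU indepU.
  have [S [SU cS]] : exists S : {set T}, S \subset U /\ #|S| = s.
    by apply: exists_subset_card; rewrite cU; move: jd; rewrite addn0 => ->.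
  have [I [IS [iI cI]]] := indep_in_s_sets cS.
  by have := indepU I (subset_trans IS SU) iI; lia.
have [[C [CU [cC nC]]]|no_clique] := classic
  (exists C : {set T}, C \subset ~: U /\ clique e C /\ #|C| = k.+1).
  apply: (IH j.+1 (U :|: C)); first by lia.
    rewrite cardsU (_ : U :&: C = set0) ?cards0 ?subn0 ?cU ?nC ?mulSn 1?addnC //.
    by apply/disjoint_setI0; rewrite disjoint_sym disjoints_subset.
  exact: card_independent_setU_clique.
exists (~: U); split=> [|C CU cC nC]; last by apply: no_clique; exists C.
have : j * k.+1 <= (t - 2) * k.+1 by rewrite leq_mul2r; apply/orP; right; lia.
by have := cardsC U; rewrite cU; lia.
Qed.

Hypotheses (e_sym : symmetric e) (e_irr : irreflexive e).

Lemma exists_independent_bin_quarter k : 2 <= t -> 2 <= k ->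
  (t - 1) * k <= s -> s <= (t - 1) * k.+1 -> 2 * s < #|T| ->
  forall a, 4 * 'C(k + a, k) <= #|T| ->
  exists I : {set T}, independent e I /\ #|I| = a.+1.
Proof.
move=> t2 k2 sk sk1 sT a bin_le.
have [R [cardR clique_free]] := exists_clique_free_complement (ltnW t2) sk1.
have /(ramsey_bin e_sym e_irr) [[C [CR [cC nC]]]|[I [_ [iI nI]]]] :
  'C(k + a, k) <= #|R| by nia.
  by case: (clique_free C CR cC nC).
by exists I.
Qed.

Lemma exists_independent_third : 2 <= t -> s <= (t - 1) * 2 -> s <= #|T| ->
  exists I : {set T}, independent e I /\ #|T| <= 3 * #|I|.
Proof.
move=> t2 st sT.
have [R [cardR no_edge]] := exists_clique_free_complement (ltnW t2) st.
have iR : independent e R.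
  move=> x y xR yR; have [<-|xy] := eqVneq x y; first by rewrite e_irr.
  apply/negP => exy; apply: (no_edge [set x; y]); last by rewrite cards2 xy.
    by rewrite subUset !sub1set xR yR.
  by move=> u v /set2P [->|->] /set2P [->|->]; rewrite ?eqxx // e_sym.
have [S [_ cS]] := exists_subset_card (A := [set: T]) (m := s) ltac:(by rewrite cardsT).
have [I [_ [iI cI]]] := indep_in_s_sets cS.
have [small|big] := leqP #|T| (3 * #|R|); first by exists R.
by exists I; split=> //; lia.
Qed.

End CliquePacking.

Theorem theorem2p1 :
  exists c1 c2 : R, (0 < c1)%R /\ (0 < c2)%R /\
  exists N : nat, forall n : nat, (N <= n)%N ->
  forall t s : nat, (2 <= t)%N -> (t < s)%N -> (2 * s < n)%N ->
  forall e : rel 'I_n, simple_graph e ->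
  (forall S : {set 'I_n}, #|S| = s ->
     exists I : {set 'I_n}, I \subset S /\ independent e I /\ #|I| = t) ->
  let k := (s %/ (t - 1))%N in
  ((INR k <= 2 * ln (INR n))%R ->
     exists I : {set 'I_n}, independent e I /\
       (c1 * INR k * Rpower (INR n) (/ INR k) <= INR #|I|)%R) /\
  ((2 * ln (INR n) < INR k)%R ->
     exists I : {set 'I_n}, independent e I /\
       (c2 * (ln (INR n) / ln (INR k / ln (INR n))) <= INR #|I|)%R).
Proof.
exists (1 / 4800)%R, (1 / 100)%R; split; first lra; split; first lra.
exists 16 => n n16 t s t2 ts sn e [e_sym e_irr] indep_in_s_sets k.
have n16R : (16 <= INR n)%R by have := le_INR 16 n ltac:(lia); rewrite /=; lra.
have k0 : 0 < k by rewrite divn_gt0; lia.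
have sk : (t - 1) * k <= s by rewrite mulnC leq_divM.
have sk1 : s <= (t - 1) * k.+1.
  by have := @ltn_ceil s (t - 1) ltac:(lia); rewrite -/k mulnC; lia.
have [k2|k1] := leqP 2 k.
  have indep_of_quarter a : (INR 'C(k + a, k) <= INR n / 4)%R ->
      exists I : {set 'I_n}, independent e I /\ (INR a.+1 <= INR #|I|)%R.
    move=> Ha; have sT : 2 * s < #|'I_n| by rewrite card_ord.
    have bin_le : 4 * 'C(k + a, k) <= #|'I_n|.
      by rewrite card_ord; apply/leP/INR_le; rewrite INR_muln [INR 4]/=; lra.
    have [I [iI nI]] := exists_independent_bin_quarter indep_in_s_sets
      e_sym e_irr t2 k2 sk sk1 sT bin_le.
    by exists I; rewrite nI; split=> //; apply: Rle_refl.
  split=> kL; [have [a [Ha Hb]] := exists_bin_le_small_k k0 n16R kL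
             | have [a [Ha Hb]] := exists_bin_le_large_k n16R kL];
  by have [I [iI HI]] := indep_of_quarter a Ha; exists I; split=> //; lra.
have k_eq1 : k = 1 by lia.
rewrite k_eq1 in sk1 *; split=> kL; last first.
  by have := two_lt_ln n16R; rewrite /= in kL; lra.
have [|I [iI nI]] := exists_independent_third indep_in_s_sets e_sym e_irr t2 sk1 _.
  by rewrite card_ord; lia.
exists I; split=> //; rewrite /= Rinv_1 Rpower_1; last lra.
rewrite card_ord in nI; have /leP/le_INR := nI; rewrite INR_muln /=; lra.
Qed.
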